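(* Let $P\subset\mathbb{R}^d$ be a polytope, let $0<\gamma<1$, and let $\mathcal{X}=\{\mathbf{x}\in\mathbb{R}^d:\|\mathbf{x}\|\le1\}$. Suppose $P^{[-\gamma]}\cap\mathcal{X}\neq\emptyset$. Then $\partial P^{[\gamma^2/2]}\cap\mathcal{X}\subseteq\partial P^{(\gamma)}$.
   Context: Write $P=\{\mathbf{x}:\mathbf{w}_i\cdot\mathbf{x}+b_i\ge0\ \forall i\}$ where the halfspaces $\{\mathbf{w}_i\cdot\mathbf{x}+b_i\ge0\}$, $\|\mathbf{w}_i\|=1$, are those defining the facets of $P$. For $\alpha>0$: $P^{[+\alpha]}=\{\mathbf{x}:\mathbf{w}_i\cdot\mathbf{x}+b_i\ge-\alpha\ \forall i\}$ (each facet halfspace moved outward by $\alpha$), $P^{[-\alpha]}=\{\mathbf{x}:\mathbf{w}_i\cdot\mathbf{x}+b_i\ge\alpha\ \forall i\}$ (moved inward by $\alpha$). With $B_\alpha=\{\mathbf{p}:\|\mathbf{p}\|\le\alpha\}$, $P^{(+\alpha)}=P+B_\alpha$ (Minkowski sum) and $P^{(-\alpha)}=P-B_\alpha=\{\mathbf{p}:\{\mathbf{p}\}+B_\alpha\subseteq P\}$. The $\alpha$-margin of $P$ is $\partial P^{[\alpha]}=P^{[+\alpha]}\setminus P^{[-\alpha]}$ and the $\alpha$-envelope of $P$ is $\partial P^{(\alpha)}=P^{(+\alpha)}\setminus P^{(-\alpha)}$. *)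

From HB Require Import structures.
From mathcomp Require Import all_boot all_order all_algebra.
From mathcomp Require Import boolp classical_sets reals.
Set Implicit Arguments. Unset Strict Implicit. Unset Printing Implicit Defensive.
Import Order.TTheory GRing.Theory Num.Theory.
Local Open Scope ring_scope.
Local Open Scope classical_set_scope.

Section Defs.
Variables (R : realType) (d : nat).
Local Notation vec := 'rV[R]_d.

Definition dotv (u v : vec) : R := \sum_(i < d) u ord0 i * v ord0 i.
Definition enorm (u : vec) : R := Num.sqrt (dotv u u).

Definition ball0 (a : R) : set vec := [set p | enorm p <= a].

Definition polytope (P : set vec) : Prop :=
  exists (n : nat) (v : 'I_n -> vec),
    P = [set x | exists l : 'I_n -> R,
           (forall i, 0 <= l i) /\ \sum_(i < n) l i = 1 /\
           x = \sum_(i < n) l i *: v i].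

Definition aff_indep (k : nat) (p : 'I_k -> vec) : Prop :=
  forall c : 'I_k -> R, \sum_(i < k) c i = 0 ->
    \sum_(i < k) c i *: p i = 0 -> forall i, c i = 0.

(* {x : w.x + b >= 0} with ||w|| = 1 is the halfspace defining a facet of P:
   it contains P and its boundary hyperplane meets P in a face of affine
   dimension d-1 (i.e. containing d affinely independent points). *)
Definition facet_halfspace (P : set vec) (w : vec) (b : R) : Prop :=
  enorm w = 1 /\ (forall x, P x -> 0 <= dotv w x + b) /\
  exists p : 'I_d -> vec,
    (forall i, P (p i) /\ dotv w (p i) + b = 0) /\ aff_indep p.

Definition shift_out (P : set vec) (a : R) : set vec :=
  [set x | forall w b, facet_halfspace P w b -> - a <= dotv w x + b].
Definition shift_in (P : set vec) (a : R) : set vec :=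
  [set x | forall w b, facet_halfspace P w b -> a <= dotv w x + b].

Definition mink_plus (P : set vec) (a : R) : set vec :=
  [set x | exists p q, P p /\ ball0 a q /\ x = p + q].
Definition mink_minus (P : set vec) (a : R) : set vec :=
  [set p | forall q, ball0 a q -> P (p + q)].

Definition margin (P : set vec) (a : R) : set vec := shift_out P a `\` shift_in P a.
Definition envelope (P : set vec) (a : R) : set vec := mink_plus P a `\` mink_minus P a.

End Defs.

(* If x
   were in P^(-gamma), pushing x by gamma against the unit normal w of a facet
   would stay in P and force w.x + b >= gamma > gamma^2/2.  Conversely the point
   z = x + gamma/2 (y - x) is within gamma of x and satisfies every facet
   inequality strictly (with margin gamma^3/4), so it suffices that such a point
   lies in P = conv v.  If it did not, a hyperplane through a vertex would
   separate it from P; rotating this hyperplane about the affine hull of the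
   vertices it contains (gift wrapping) adds affinely independent vertices
   until there are d of them, and it then bounds a facet of P violated by z. *)

From HB Require Import structures.
From mathcomp Require Import all_boot all_order all_algebra.
From mathcomp Require Import boolp classical_sets reals topology normedtype derive.
From mathcomp Require Import lra ring.
Import Order.TTheory GRing.Theory Num.Theory numFieldNormedType.Exports.
Local Open Scope ring_scope.
Local Open Scope classical_set_scope.
Set Implicit Arguments. Unset Strict Implicit. Unset Printing Implicit Defensive.

Section InnerProduct.
Variables (R : realType) (d : nat).
Local Notation vec := 'rV[R]_d.
Local Notation dot := (@dotv R d).

Lemma dotvC (u v : vec) : dot u v = dot v u.
Proof. by apply: eq_bigr => i _; rewrite mulrC. Qed.

Lemma dotvDl (u v w : vec) : dot (u + v) w = dot u w + dot v w.
Proof. by rewrite /dotv -big_split; apply: eq_bigr => i _; rewrite mxE mulrDl. Qed.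

Lemma dotvZl a (u w : vec) : dot (a *: u) w = a * dot u w.
Proof. by rewrite /dotv mulr_sumr; apply: eq_bigr => i _; rewrite mxE mulrA. Qed.

Lemma dotvNl (u w : vec) : dot (- u) w = - dot u w.
Proof. by rewrite -scaleN1r dotvZl mulN1r. Qed.

Lemma dotvBl (u v w : vec) : dot (u - v) w = dot u w - dot v w.
Proof. by rewrite dotvDl dotvNl. Qed.

Lemma dotvDr (u v w : vec) : dot w (u + v) = dot w u + dot w v.
Proof. by rewrite dotvC dotvDl !(dotvC w). Qed.

Lemma dotvZr a (u w : vec) : dot w (a *: u) = a * dot w u.
Proof. by rewrite dotvC dotvZl dotvC. Qed.

Lemma dotvBr (u v w : vec) : dot w (u - v) = dot w u - dot w v.
Proof. by rewrite dotvC dotvBl !(dotvC w). Qed.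

Lemma dotv0r (w : vec) : dot w 0 = 0.
Proof. by rewrite /dotv big1 // => i _; rewrite mxE mulr0. Qed.

Lemma dotv0l (w : vec) : dot 0 w = 0.
Proof. by rewrite dotvC dotv0r. Qed.

Lemma dotv_sumr k (F : 'I_k -> vec) w :
  dot w (\sum_(i < k) F i) = \sum_(i < k) dot w (F i).
Proof.
rewrite dotvC (big_morph (fun u => dot u w) (fun u v => dotvDl u v w) (dotv0l w)).
by apply: eq_bigr => i _; rewrite dotvC.
Qed.

Lemma dotv_subZ (u w : vec) s :
  dot (u - s *: w) (u - s *: w) = dot u u - 2 * s * dot u w + s ^+ 2 * dot w w.
Proof. by rewrite dotvBl !dotvBr !dotvZl !dotvZr (dotvC w u); ring. Qed.

Lemma dotv_ge0 (u : vec) : 0 <= dot u u.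
Proof. by apply: sumr_ge0 => i _; rewrite -expr2 sqr_ge0. Qed.

Lemma dotv_gt0 (u : vec) : u != 0 -> 0 < dot u u.
Proof.
apply: contraR; rewrite -leNgt => u_le0; apply/eqP/rowP => j; rewrite mxE.
have /psumr_eq0P u2_eq0 : dot u u = 0 by apply/eqP; rewrite eq_le u_le0 dotv_ge0.
have /eqP := u2_eq0 (fun i _ => ltac:(by rewrite -expr2 sqr_ge0)) j isT.
by rewrite mulf_eq0 orbb => /eqP.
Qed.

Lemma dotv_enorm (u : vec) : dot u u = enorm u ^+ 2.
Proof. by rewrite sqr_sqrtr ?dotv_ge0. Qed.

Lemma enorm_le (u : vec) (a : R) : 0 <= a -> (enorm u <= a) = (dot u u <= a ^+ 2).
Proof. by move=> a_ge0; rewrite dotv_enorm ler_sqr ?nnegrE ?sqrtr_ge0. Qed.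

Lemma exists_orthogonal k (U : 'I_k -> vec) :
  (k < d)%N -> exists2 r : vec, r != 0 & forall m, dot r (U m) = 0.
Proof.
move=> lt_kd; pose A := \matrix_(j < d, m < k) U m ord0 j.
have : ~~ row_free A.
  by rewrite -row_leq_rank -ltnNge (leq_ltn_trans (rank_leq_col A)).
rewrite -kermx_eq0 => /rowV0Pn[r /sub_kermxP rA0 r_neq0]; exists r => // m.
transitivity ((r *m A) ord0 m); last by rewrite rA0 mxE.
by rewrite mxE; apply: eq_bigr => j _; rewrite mxE.
Qed.

End InnerProduct.

Section AffineHull.
Variables (R : realType) (d : nat).
Local Notation vec := 'rV[R]_d.
Local Notation dot := (@dotv R d).

Definition in_aff_hull k (a : 'I_k -> vec) (x : vec) :=
  exists mu : 'I_k -> R, \sum_(i < k) mu i = 1 /\ x = \sum_(i < k) mu i *: a i.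

Lemma in_aff_hull_dot k (a : 'I_k -> vec) w b x :
  (forall m, dot w (a m) = b) -> in_aff_hull a x -> dot w x = b.
Proof.
move=> wa [mu [mu1 ->]]; rewrite dotv_sumr.
under eq_bigr => i _ do rewrite dotvZr wa.
by rewrite -mulr_suml mu1 mul1r.
Qed.

Lemma in_aff_hull_comb k m (a : 'I_k -> vec) (p : 'I_m -> vec) (l : 'I_m -> R) :
  (forall i, in_aff_hull a (p i)) -> \sum_(i < m) l i = 1 ->
  in_aff_hull a (\sum_(i < m) l i *: p i).
Proof.
move=> /fin_all_exists[mu pa] l1.
exists (fun j => \sum_(i < m) l i * mu i j); split.
  rewrite exchange_big /= -l1; apply: eq_bigr => i _.
  by rewrite -mulr_sumr (proj1 (pa i)) mulr1.
under eq_bigr => i _ do rewrite (proj2 (pa i)) scaler_sumr.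
rewrite exchange_big /=; apply: eq_bigr => j _; rewrite scaler_suml.
by apply: eq_bigr => i _; rewrite scalerA.
Qed.

Lemma aff_indep_hull_leq k m (a : 'I_k -> vec) (p : 'I_m -> vec) :
  aff_indep p -> (forall j, in_aff_hull a (p j)) -> (m <= k)%N.
Proof.
move=> p_indep /fin_all_exists[mu pa]; rewrite leqNgt; apply/negP => lt_km.
have [c c_neq0 c_mu] := exists_orthogonal (fun j => \row_i mu i j) lt_km.
have {}c_mu j : \sum_(i < m) c ord0 i * mu i j = 0.
  by rewrite -[RHS](c_mu j); apply: eq_bigr => i _; rewrite mxE.
suff c_eq0 : forall i, c ord0 i = 0.
  by move/eqP: c_neq0; apply; apply/rowP => i; rewrite c_eq0 mxE.
apply: p_indep.
  under eq_bigr => i _ do rewrite -[c ord0 i]mulr1 -(proj1 (pa i)) mulr_sumr.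
  by rewrite exchange_big big1.
under eq_bigr => i _ do rewrite (proj2 (pa i)) scaler_sumr.
rewrite exchange_big big1 // => j _.
under eq_bigr => i _ do rewrite scalerA.
by rewrite -scaler_suml c_mu scale0r.
Qed.

Lemma exists_orthogonal_to_hull k (q : 'I_k -> vec) m0 u : (k < d)%N ->
  exists2 r : vec, r != 0 & dot r u = 0 /\ forall m, dot r (q m) = dot r (q m0).
Proof.
(* q m0 - q m0 = 0 imposes nothing, so the m0-th slot is free for u. *)
move=> lt_kd; have [r r_neq0 r_perp] :=
  exists_orthogonal (fun m => if m == m0 then u else q m - q m0) lt_kd.
exists r => //; split; first by have := r_perp m0; rewrite eqxx.
move=> m; have := r_perp m; case: eqP => [->//|_].
by rewrite dotvBr => /eqP; rewrite subr_eq0 => /eqP.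
Qed.

Definition extend T k (a : 'I_k -> T) (x : T) (i : 'I_k.+1) : T :=
  if unlift ord_max i is Some j then a j else x.

Lemma extend_lift T k (a : 'I_k -> T) x i : extend a x (lift ord_max i) = a i.
Proof. by rewrite /extend liftK. Qed.

Lemma extend_max T k (a : 'I_k -> T) x : extend a x ord_max = x.
Proof. by rewrite /extend unlift_none. Qed.

Lemma comp_extend T U (f : T -> U) k (a : 'I_k -> T) x :
  f \o extend a x = extend (f \o a) (f x).
Proof. by apply: funext => i; rewrite /extend /=; case: unlift. Qed.

Lemma aff_indep_extend k (a : 'I_k -> vec) x :
  aff_indep a -> ~ in_aff_hull a x -> aff_indep (extend a x).
Proof.
move=> a_indep x_out c; rewrite !(bigD1_ord ord_max) //= extend_max => c_sum.
under eq_bigr => i _ do rewrite extend_lift.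
move=> c_comb.
have sum_lift : \sum_(i < k) c (lift ord_max i) = - c ord_max.
  by apply/eqP; rewrite -addr_eq0 addrC c_sum.
have comb_lift : \sum_(i < k) c (lift ord_max i) *: a i = - (c ord_max *: x).
  by apply/eqP; rewrite -addr_eq0 addrC c_comb.
have c_max : c ord_max = 0.
  apply: contra_notP x_out => /eqP c_neq0.
  exists (fun i => - c (lift ord_max i) / c ord_max); split.
    by rewrite -mulr_suml sumrN sum_lift opprK divff.
  apply: (scalerI c_neq0); rewrite scaler_sumr.
  under eq_bigr => i _ do rewrite scalerA mulrCA divff // mulr1 scaleNr.
  by rewrite sumrN comb_lift opprK.
move: sum_lift comb_lift; rewrite c_max oppr0 scale0r oppr0 => sum_lift comb_lift.
move=> i; case: (unliftP ord_max i) => [j ->|->] //.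
exact: a_indep (fun j => c (lift ord_max j)) sum_lift comb_lift j.
Qed.

End AffineHull.

Lemma continuous_sum (R : numFieldType) (T : topologicalType) (I : finType)
    (F : I -> T -> R) :
  (forall i, continuous (F i)) -> continuous (fun x => \sum_(i : I) F i x).
Proof.
move=> F_cont; elim: (index_enum _) => [|i s IHs] x.
  by under eq_fun do rewrite big_nil; exact: cst_continuous.
by under eq_fun do rewrite big_cons; apply: continuousD; [exact: F_cont|exact: IHs].
Qed.

Lemma le0_of_quad_min_at0 (R : realFieldType) (a b : R) : 0 <= b ->
  (forall s, 0 < s < 1 -> 2 * s * a <= s ^+ 2 * b) -> a <= 0.
Proof.
move=> b_ge0 quad_ge; rewrite leNgt; apply/negP => a_gt0.
have ab_gt0 : 0 < 2 * a + b by lra.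
pose s := a / (2 * a + b).
have s_gt0 : 0 < s by rewrite divr_gt0.
have s_lt1 : s < 1 by rewrite ltr_pdivrMr // mul1r; lra.
have s_ab : s * (2 * a + b) = a by rewrite mulfVK ?gt_eqF.
have := quad_ge s; rewrite s_gt0 s_lt1 => /(_ isT); nra.
Qed.

Section ConvexHull.
Variables (R : realType) (d n : nat) (v : 'I_n -> 'rV[R]_d).
Local Notation vec := 'rV[R]_d.
Local Notation dot := (@dotv R d).

Definition conv_hull : set vec := [set x | exists l : 'I_n -> R,
  (forall i, 0 <= l i) /\ \sum_(i < n) l i = 1 /\ x = \sum_(i < n) l i *: v i].

Lemma conv_hull_vertex i : conv_hull (v i).
Proof.
exists (fun j => (j == i)%:R); split; first by move=> j; rewrite ler0n.
split; first by rewrite (bigD1 i) //= eqxx big1 ?addr0 // => j /negbTE ->.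
by rewrite (bigD1 i) //= eqxx scale1r big1 ?addr0 // => j /negbTE ->; rewrite scale0r.
Qed.

Lemma conv_hull_le u b x : (forall i, dot u (v i) <= b) -> conv_hull x -> dot u x <= b.
Proof.
move=> ub [l [l_ge0 [l1 ->]]]; rewrite dotv_sumr -[leRHS]mul1r -l1 mulr_suml.
by apply: ler_sum => i _; rewrite dotvZr ler_wpM2l.
Qed.

Lemma conv_hull_gt0 x : conv_hull x -> (0 < n)%N.
Proof.
move=> [l [_ [l1 _]]]; case: posnP => // n0; move: l l1; rewrite n0 => l.
by rewrite big_ord0 => /esym/eqP; rewrite oner_eq0.
Qed.

Lemma exists_vertex_notin_aff_hull k m (a : 'I_k -> vec) (p : 'I_m -> vec) :
  (k < m)%N -> aff_indep p -> (forall j, conv_hull (p j)) ->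
  exists i, ~ in_aff_hull a (v i).
Proof.
move=> lt_km p_indep p_conv; apply: contrapT => all_in.
have v_aff i : in_aff_hull a (v i) by apply: contrapT => v_out; apply: all_in; exists i.
suff : (m <= k)%N by rewrite leqNgt lt_km.
apply: aff_indep_hull_leq p_indep _ => j.
by have [l [_ [l1 ->]]] := p_conv j; apply: in_aff_hull_comb.
Qed.

Definition simplex : set 'rV[R]_n :=
  [set L | forall i, `[0, 1] (L ord0 i)] `&` [set L | \sum_(i < n) L ord0 i = 1].

Definition bary (L : 'rV[R]_n) : vec := \sum_(i < n) L ord0 i *: v i.

Lemma compact_simplex : compact simplex.
Proof.
apply: compact_closedI.
  exact: (@rV_compact R _ (fun=> `[0, 1]%classic) (fun=> @segment_compact R 0 1)).
have sum_cont : continuous (fun L : 'rV[R]_n => \sum_(i < n) L ord0 i).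
  by apply: continuous_sum => i; apply: coord_continuous.
exact: (proj1 (continuous_closedP _) sum_cont _ (@closed_eq _ 1)).
Qed.

Lemma conv_hull_bary L : simplex L -> conv_hull (bary L).
Proof.
case=> L01 L1; exists (fun i => L ord0 i); split => // i.
by have := L01 i; rewrite /= in_itv => /andP[].
Qed.

Lemma simplex_towards_vertex L j s : simplex L -> 0 <= s <= 1 ->
  simplex ((1 - s) *: L + s *: delta_mx ord0 j).
Proof.
move=> [L01 L1] /andP[s_ge0 s_le1]; split.
  move=> i /=; have := L01 i; rewrite /= !in_itv !mxE /= => /andP[Li_ge0 Li_le1].
  by case: (i == j); rewrite ?mulr1 ?mulr0 ?addr0; apply/andP; split; nra.
rewrite /=; under eq_bigr do rewrite !mxE.
rewrite big_split /= -!mulr_sumr L1 (bigD1 j) //= eqxx.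
by rewrite big1 ?addr0 ?mulr1 ?subrK // => i /negbTE ->.
Qed.

Lemma bary_towards_vertex L j s :
  bary ((1 - s) *: L + s *: delta_mx ord0 j) = (1 - s) *: bary L + s *: v j.
Proof.
rewrite /bary; under eq_bigr do rewrite !mxE scalerDl -!scalerA.
rewrite big_split /= -!scaler_sumr; congr (_ + _ *: _).
by rewrite (bigD1 j) //= eqxx scale1r big1 ?addr0 // => i /negbTE ->; rewrite scale0r.
Qed.

Lemma simplex_delta j : simplex (delta_mx ord0 j).
Proof.
split=> [i|] /=; first by rewrite in_itv /= mxE eqxx; case: (i == j); rewrite /= ?lexx ?ler01.
rewrite (bigD1 j) //= mxE !eqxx big1 ?addr0 // => i /negbTE.
by rewrite mxE eqxx => ->.
Qed.

Lemma continuous_dist2_bary z :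
  continuous (fun L => dot (z - bary L) (z - bary L)).
Proof.
have coord_cont j : continuous (fun L : 'rV[R]_n => (z - bary L) ord0 j).
  have -> : (fun L => (z - bary L) ord0 j) =
            (fun L => z ord0 j - \sum_(i < n) L ord0 i * v i ord0 j).
    apply: funext => L; rewrite !mxE /bary summxE.
    by under eq_bigr do rewrite mxE.
  move=> L; apply: continuousB; first exact: cst_continuous.
  apply: continuous_sum => i {}L.
  by apply: continuousM; [exact: coord_continuous|exact: cst_continuous].
by apply: continuous_sum => j L; apply: continuousM; apply: coord_cont.
Qed.

Lemma exists_nearest_bary z : (0 < n)%N -> exists2 L, simplex L &
  forall L', simplex L' ->
    dot (z - bary L) (z - bary L) <= dot (z - bary L') (z - bary L').
Proof.
move=> n_gt0; have simplex0 : simplex !=set0.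
  by exists (delta_mx ord0 (Ordinal n_gt0)); exact: simplex_delta.
have [L SL L_min] := compact_EVT_min simplex0 compact_simplex
  (continuous_subspaceT (continuous_dist2_bary (z := z))).
by exists L => [|L' SL']; [rewrite -in_setE | apply: L_min; rewrite in_setE].
Qed.

Lemma nearest_bary_obtuse z L : simplex L ->
  (forall L', simplex L' ->
    dot (z - bary L) (z - bary L) <= dot (z - bary L') (z - bary L')) ->
  forall j, dot (z - bary L) (v j - bary L) <= 0.
Proof.
move=> SL L_min j; set c := bary L.
apply: (le0_of_quad_min_at0 (dotv_ge0 (v j - c))) => s /andP[s_gt0 s_lt1].
have /L_min : simplex ((1 - s) *: L + s *: delta_mx ord0 j).
  by apply: simplex_towards_vertex; rewrite ?ltW.
rewrite bary_towards_vertex -/c.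
have -> : z - ((1 - s) *: c + s *: v j) = (z - c) - s *: (v j - c).
  by apply/rowP => k; rewrite !mxE; ring.
rewrite dotv_subZ; lra.
Qed.

Lemma conv_hull_separation z : ~ conv_hull z -> exists u, forall i, dot u (v i) < dot u z.
Proof.
move=> z_out; have [n0|n_gt0] := posnP n.
  by exists 0 => i; have := ltn_ord i; move: (nat_of_ord i) => m; rewrite n0.
have [L SL L_min] := exists_nearest_bary z n_gt0.
have u_neq0 : z - bary L != 0.
  by apply: contra_notN z_out; rewrite subr_eq0 => /eqP ->; exact: conv_hull_bary.
exists (z - bary L) => i.
have := nearest_bary_obtuse SL L_min i; have := dotv_gt0 u_neq0.
rewrite !dotvBr; lra.
Qed.

End ConvexHull.

Lemma exists_rotation_slope (R : realFieldType) (I : finType) (al rh : I -> R) i0 :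
  al i0 < 0 -> (forall i, al i <= 0) -> (forall i, al i = 0 -> rh i = 0) ->
  exists M i, [/\ al i < 0, forall j, M * al j + rh j <= 0 & M * al i + rh i = 0].
Proof.
move=> al_i0 al_le0 al0_rh0; pose slope i := rh i / - al i.
have rh_slope i : al i < 0 -> rh i = - slope i * al i.
  by move=> al_lt0; rewrite mulNr -mulrN mulfVK // oppr_eq0 lt_eqF.
case: (@arg_maxP _ R _ i0 (fun i => al i < 0) slope al_i0) => i al_i slope_max.
exists (slope i), i; split => // [j|]; last by rewrite rh_slope //; ring.
have [al_j|] := ltrP (al j) 0.
  rewrite rh_slope // mulNr -mulrBl mulr_ge0_le0 ?(ltW al_j) // subr_ge0.
  exact: slope_max.
move=> al_j; have al_j0 : al j = 0 by apply/eqP; rewrite eq_le al_le0.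
by rewrite al_j0 al0_rh0 // mulr0 addr0.
Qed.

Section GiftWrapping.
Variables (R : realType) (d n : nat) (v : 'I_n -> 'rV[R]_d) (z : 'rV[R]_d).
Variable p : 'I_d -> 'rV[R]_d.
Hypotheses (p_indep : aff_indep p) (p_conv : forall j, conv_hull v (p j)).
Local Notation vec := 'rV[R]_d.
Local Notation dot := (@dotv R d).

Definition tight_support k (a : 'I_k -> 'I_n) (u : vec) (b : R) :=
  [/\ aff_indep (v \o a), u != 0, forall j, dot u (v (a j)) = b,
      forall i, dot u (v i) <= b & b <= dot u z].

Lemma tight_support_facet (a : 'I_d -> 'I_n) u b : tight_support a u b ->
  exists w c, facet_halfspace (conv_hull v) w c /\ dot w z + c <= 0.
Proof.
case=> a_indep u_neq0 u_a u_v u_z.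
set N := Num.sqrt (dot u u).
have N_gt0 : 0 < N by rewrite sqrtr_gt0 dotv_gt0.
have NN : N * N = dot u u by rewrite -expr2 sqr_sqrtr ?dotv_ge0.
have wE x : dot ((- N^-1) *: u) x + b / N = (b - dot u x) / N.
  by rewrite dotvZl mulrBl mulNr addrC [N^-1 * _]mulrC.
exists ((- N^-1) *: u), (b / N); split; last first.
  by rewrite wE pmulr_lle0 ?invr_gt0 // subr_le0.
split; last split.
- rewrite /enorm dotvZl dotvZr mulrA mulrNN -NN.
  by rewrite (_ : N^-1 / N * (N * N) = 1) ?sqrtr1 //; field; rewrite gt_eqF.
- move=> x x_conv; rewrite wE divr_ge0 ?(ltW N_gt0) // subr_ge0.
  exact: conv_hull_le.
- exists (v \o a); split => // j.
  by split; [exact: conv_hull_vertex | rewrite wE u_a subrr mul0r].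
Qed.

Lemma tight_support_extend k (a : 'I_k -> 'I_n) u b i :
  tight_support a u b -> dot u (v i) = b -> ~ in_aff_hull (v \o a) (v i) ->
  tight_support (extend a i) u b.
Proof.
case=> a_indep u_neq0 u_a u_v u_z u_i v_out; split => //.
  by rewrite comp_extend; apply: aff_indep_extend.
by move=> j; rewrite /extend; case: unlift.
Qed.

Lemma tight_support_pencil k (a : 'I_k -> 'I_n) u b r x0 (M s : R) i :
  tight_support a u b -> r != 0 -> dot r u = 0 ->
  (forall m, dot r (v (a m)) = dot r x0) -> s != 0 ->
  (forall j, M * (dot u (v j) - b) + s * (dot r (v j) - dot r x0) <= 0) ->
  M * (dot u (v i) - b) + s * (dot r (v i) - dot r x0) = 0 ->
  0 <= M * (dot u z - b) + s * (dot r z - dot r x0) ->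
  exists u' b', tight_support a u' b' /\ dot u' (v i) = b'.
Proof.
case=> a_indep _ u_a _ _ r_neq0 r_u r_a s_neq0 M_v M_i M_z.
pose u' := M *: u + s *: r; pose b' := M * b + s * dot r x0.
have u'E x : dot u' x - b' = M * (dot u x - b) + s * (dot r x - dot r x0).
  by rewrite /u' /b' !dotvDl !dotvZl; ring.
exists u', b'; split; last by apply/eqP; rewrite -subr_eq0 u'E M_i.
split => //.
- apply: contra_neq s_neq0 => u'0.
  have : dot r u' = s * dot r r by rewrite /u' dotvDr !dotvZr r_u mulr0 add0r.
  rewrite u'0 dotv0r => /esym/eqP.
  by rewrite mulf_eq0 (gt_eqF (dotv_gt0 r_neq0)) orbF => /eqP.
- by move=> j; apply/eqP; rewrite -subr_eq0 u'E u_a r_a !subrr !mulr0 addr0.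
- by move=> j; rewrite -subr_le0 u'E.
- by rewrite -subr_ge0 u'E.
Qed.

Lemma tight_support_rotate k (a : 'I_k -> 'I_n) u b :
  (0 < k)%N -> (k < d)%N -> tight_support a u b ->
  (forall i, dot u (v i) = b -> in_aff_hull (v \o a) (v i)) ->
  exists u' b' i,
    [/\ tight_support a u' b', dot u' (v i) = b' & ~ in_aff_hull (v \o a) (v i)].
Proof.
move=> k_gt0 lt_kd supp tight_aff; have [_ _ u_a u_v u_z] := supp.
have [i0 vi0_out] := exists_vertex_notin_aff_hull (v \o a) lt_kd p_indep p_conv.
pose a0 := v (a (Ordinal k_gt0)).
have [r r_neq0 [r_u r_a]] := exists_orthogonal_to_hull (v \o a) (Ordinal k_gt0) u lt_kd.
pose al i := dot u (v i) - b; pose rh i := dot r (v i) - dot r a0.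
have al_le0 i : al i <= 0 by rewrite subr_le0.
have al_i0 : al i0 < 0.
  rewrite subr_lt0 lt_neqAle u_v andbT.
  by apply: contra_notN vi0_out => /eqP /tight_aff.
have al_off i : al i < 0 -> ~ in_aff_hull (v \o a) (v i).
  by move=> al_i vi_aff; move: al_i; rewrite /al (in_aff_hull_dot u_a vi_aff) subrr ltxx.
have slope (s : R) : exists M i,
    [/\ al i < 0, forall j, M * al j + s * rh j <= 0 & M * al i + s * rh i = 0].
  apply: exists_rotation_slope al_i0 al_le0 _ => i /eqP.
  rewrite subr_eq0 => /eqP /tight_aff vi_aff.
  by rewrite /rh (in_aff_hull_dot r_a vi_aff) subrr mulr0.
(* Rotating towards r or towards -r: at the vertex i0 the two slopes are seen
   to sum to a nonnegative number, so one of the two keeps z outside. *)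
have [M1 [i1 [al_i1 M1_v M1_i1]]] := slope 1.
have [M2 [i2 [al_i2 M2_v M2_i2]]] := slope (-1).
have M12_ge0 : 0 <= M1 + M2.
  by rewrite -(nmulr_lle0 _ al_i0); have := M1_v i0; have := M2_v i0; lra.
have al_z : 0 <= dot u z - b by rewrite subr_ge0.
have M12_z := mulr_ge0 M12_ge0 al_z.
have [M1_z|M1_z] := lerP 0 (M1 * (dot u z - b) + 1 * (dot r z - dot r a0)).
  have [u' [b' [supp' u'_i]]] :=
    tight_support_pencil supp r_neq0 r_u r_a (oner_neq0 _) M1_v M1_i1 M1_z.
  by exists u', b', i1; split => //; apply: al_off.
have M2_z : 0 <= M2 * (dot u z - b) + -1 * (dot r z - dot r a0) by lra.
have N1_neq0 : -1 != 0 :> R by rewrite oppr_eq0 oner_neq0.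
have [u' [b' [supp' u'_i]]] :=
  tight_support_pencil supp r_neq0 r_u r_a N1_neq0 M2_v M2_i2 M2_z.
by exists u', b', i2; split => //; apply: al_off.
Qed.

Lemma tight_support_step k (a : 'I_k -> 'I_n) u b :
  (0 < k)%N -> (k < d)%N -> tight_support a u b ->
  exists u' b' i, tight_support (extend a i) u' b'.
Proof.
move=> k_gt0 lt_kd supp.
have [[i [u_i vi_out]]|no_new] :=
  pselect (exists i, dot u (v i) = b /\ ~ in_aff_hull (v \o a) (v i)).
  by exists u, b, i; apply: tight_support_extend.
have tight_aff i : dot u (v i) = b -> in_aff_hull (v \o a) (v i).
  by move=> u_i; apply: contrapT => vi_out; apply: no_new; exists i.
have [u' [b' [i [supp' u'_i vi_out]]]] := tight_support_rotate k_gt0 lt_kd supp tight_aff.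
by exists u', b', i; apply: tight_support_extend.
Qed.

Lemma tight_support_full k (a : 'I_k -> 'I_n) u b :
  (0 < k)%N -> (k <= d)%N -> tight_support a u b ->
  exists (a' : 'I_d -> 'I_n) u' b', tight_support a' u' b'.
Proof.
move: {2}(d - k)%N (erefl (d - k)%N) => m.
elim: m k a u b => [|m IHm] k a u b dk k_gt0 le_kd supp.
  have kd : k = d by apply/eqP; rewrite eqn_leq le_kd -subn_eq0 dk.
  by subst k; exists a, u, b.
have lt_kd : (k < d)%N by rewrite -subn_gt0 dk.
have [u' [b' [i supp']]] := tight_support_step k_gt0 lt_kd supp.
by apply: (IHm k.+1 (extend a i) u' b') => //; rewrite subnS dk.
Qed.

Lemma notin_conv_hull_facet : (0 < d)%N -> ~ conv_hull v z ->
  exists w c, facet_halfspace (conv_hull v) w c /\ dot w z + c <= 0.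
Proof.
move=> d_gt0 z_out; have [u u_sep] := conv_hull_separation z_out.
have n_gt0 := conv_hull_gt0 (p_conv (Ordinal d_gt0)).
have [imax _ u_max] := @arg_maxP _ R _ (Ordinal n_gt0) xpredT (fun i => dot u (v i)) isT.
have supp1 : tight_support (fun _ : 'I_1 => imax) u (dot u (v imax)).
  split => //.
  - by move=> c; rewrite big_ord1 => c0 _ i; rewrite (ord1 i).
  - by apply: contraTneq (u_sep imax) => ->; rewrite !dotv0l ltxx.
  - by move=> i; apply: u_max.
  - exact: ltW (u_sep imax).
have [a [u' [b' supp]]] := tight_support_full (isT : (0 < 1)%N) d_gt0 supp1.
exact: tight_support_facet supp.
Qed.

End GiftWrapping.

Lemma facet_dim_gt0 (R : realType) d (P : set 'rV[R]_d) w b :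
  facet_halfspace P w b -> (0 < d)%N.
Proof.
case=> w1 _; rewrite lt0n; apply: contra_eqN w1 => /eqP d0.
rewrite /enorm /dotv big1 ?sqrtr0 ?(eq_sym 0) ?oner_eq0 // => -[i i_lt] _.
by exfalso; move: i_lt; rewrite d0.
Qed.

Lemma facet_normal_unit (R : realType) d (P : set 'rV[R]_d) w b :
  facet_halfspace P w b -> dotv w w = 1.
Proof. by case=> w1 _; rewrite dotv_enorm w1 expr1n. Qed.

Section Polytope.
Variables (R : realType) (d : nat) (P : set 'rV[R]_d).
Local Notation dot := (@dotv R d).

Lemma polytope_facets_gt0 z w0 b0 : polytope P -> facet_halfspace P w0 b0 ->
  (forall w b, facet_halfspace P w b -> 0 < dot w z + b) -> P z.
Proof.
move=> [n [v ->]] facet0 z_gt0; apply: contrapT => z_out.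
have [_ [_ [p [p_on p_indep]]]] := facet0.
have p_conv j : conv_hull v (p j) by case: (p_on j).
have [w [c [facet_wc wz_le0]]] :=
  notin_conv_hull_facet p_indep p_conv (facet_dim_gt0 facet0) z_out.
by have := z_gt0 w c facet_wc; rewrite ltNge wz_le0.
Qed.

Lemma le_shift_in a a' : a <= a' -> shift_in P a' `<=` shift_in P a.
Proof. by move=> le_aa' x x_in w b /x_in; apply: le_trans. Qed.

Lemma mink_minus_sub_shift_in a : 0 <= a -> mink_minus P a `<=` shift_in P a.
Proof.
move=> a_ge0 x x_in w b facet_wb; have ww1 := facet_normal_unit facet_wb.
have q_in : ball0 a ((- a) *: w).
  by rewrite /ball0 /= enorm_le // dotvZl dotvZr ww1 mulr1 mulrNN expr2.
have := facet_wb.2.1 _ (x_in _ q_in).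
by rewrite dotvDr dotvZr ww1; lra.
Qed.

Lemma facet_gt0_midway x y g : 0 < g < 1 ->
  shift_out P (g ^+ 2 / 2) x -> shift_in P g y ->
  forall w b, facet_halfspace P w b -> 0 < dot w (x + (g / 2) *: (y - x)) + b.
Proof.
move=> /andP[g_gt0 g_lt1] x_out y_in w b facet_wb.
have := x_out w b facet_wb; have := y_in w b facet_wb.
rewrite dotvDr dotvZr dotvBr; set wx := dot w x; set wy := dot w y => wy_ge wx_ge.
have g3_gt0 : 0 < g ^+ 3 by rewrite exprn_gt0.
have -> : wx + g / 2 * (wy - wx) + b =
  (1 - g / 2) * (wx + b + g ^+ 2 / 2) + g / 2 * (wy + b - g) + g ^+ 3 / 4 by field.
have : 0 <= (1 - g / 2) * (wx + b + g ^+ 2 / 2) by apply: mulr_ge0; lra.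
have : 0 <= g / 2 * (wy + b - g) by apply: mulr_ge0; lra.
lra.
Qed.

End Polytope.

Lemma ball0_half_sub (R : realType) d (x y : 'rV[R]_d) g : 0 <= g ->
  enorm x <= 1 -> enorm y <= 1 -> ball0 g ((g / 2) *: (x - y)).
Proof.
move=> g_ge0; rewrite /ball0 /= !enorm_le ?ler01 // expr1n => x1 y1.
rewrite dotvZl dotvZr dotvBl !dotvBr (dotvC y x).
have := dotv_ge0 (x + y); rewrite dotvDl !dotvDr (dotvC y x) => xy_ge0.
have gg : g / 2 * (g / 2) * 4 = g ^+ 2 by field.
nra.
Qed.

Theorem theorem11 (R : realType) (d : nat) (P : set 'rV[R]_d) (gamma : R) :
  polytope P -> 0 < gamma -> gamma < 1 ->
  shift_in P gamma `&` (ball0 1 : set 'rV[R]_d) !=set0 ->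
  margin P (gamma ^+ 2 / 2) `&` (ball0 1 : set 'rV[R]_d) `<=` envelope P gamma.
Proof.
move=> polyP g_gt0 g_lt1 [y [y_in y1]] x [[x_out x_notin] x1].
have g01 : 0 < gamma < 1 by rewrite g_gt0 g_lt1.
have [w0 [b0 facet0]] : exists w b, facet_halfspace P w b.
  apply: contrapT => no_facet; apply: x_notin => w b facet_wb.
  by exfalso; apply: no_facet; exists w, b.
pose z := x + (gamma / 2) *: (y - x).
split.
  exists z, (x - z); split; last split.
  - apply: polytope_facets_gt0 polyP facet0 _.
    exact: facet_gt0_midway g01 x_out y_in.
  - have -> : x - z = (gamma / 2) *: (x - y).
      by apply/rowP => k; rewrite !mxE; ring.
    exact: ball0_half_sub (ltW g_gt0) x1 y1.
  - by rewrite addrC subrK.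
move=> /(mink_minus_sub_shift_in (ltW g_gt0)); apply: contra_not x_notin.
apply: le_shift_in; nra.
Qed.
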